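(* Let $k=\mathbb{F}_q$ with $q=2^m\geq 4$, let $n\geq 1$, let $B$ be a finite set and let $\mathcal{P}=\coprod_{i\in B}P_i$ with each $P_i\cong\mathbb{P}^n$ over $k$, with the natural map $h\colon\mathcal{P}\to B$, $P_i\mapsto i$. Let $\sigma$ be a permutation of $\mathcal{P}(k)=\coprod_{i\in B}P_i(k)$ such that (1) for every $i\in B$ there is $j\in B$ with $\sigma(P_i(k))=P_j(k)$, so that $\sigma$ induces a permutation $\sigma_B$ of $B$; and (2) each such bijection $P_i(k)\to P_j(k)$ is induced by a projective linear isomorphism $P_i\to P_j$ defined over $k$. Then $\sigma$ and $\sigma_B$ have the same parity. *)

From mathcomp Require Import all_boot all_order all_fingroup all_algebra.
Set Implicit Arguments. Unset Strict Implicit. Unset Printing Implicit Defensive.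
Import GRing.Theory.
Local Open Scope ring_scope.

(* Points of P^n over a finite field F: one-dimensional subspaces of F^(n+1),
   represented as the set of vectors on the line (0 included). *)
Definition is_line (F : finFieldType) (n : nat) (L : {set 'rV[F]_n.+1}) : bool :=
  [exists v : 'rV[F]_n.+1, (v != 0) && (L == [set c *: v | c : F])].

Definition ppoint (F : finFieldType) (n : nat) :=
  {L : {set 'rV[F]_n.+1} | is_line L}.

Definition plin_img (F : finFieldType) (n : nat) (A : 'M[F]_n.+1)
  (L : {set 'rV[F]_n.+1}) : {set 'rV[F]_n.+1} :=
  [set v *m A | v in L].

(* An invertible matrix acts on P^n(F) by a permutation; the parity [psign] of
   that permutation is a homomorphism from GL_(n+1)(F) to Z/2.  It kills every
   transvection, because conjugation by a diagonal matrix rescales a transvection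
   and |F| > 2 supplies a scalar a with a and a - 1 both nonzero.  In
   characteristic 2 it also kills diagonal matrices, which are squares, and
   permutation matrices, which are products of transvections; by the LUP
   decomposition it is therefore trivial.  Hence sigma permutes each fibre
   evenly, and writing sigma as sigma_B acting on B * P^n(F) times fibrewise
   permutations, its parity is |P^n(F)| times that of sigma_B; |P^n(F)| is odd
   because |P^n(F)| (q - 1) = q^(n+1) - 1 with q even. *)

From mathcomp Require Import all_boot all_order all_fingroup all_algebra.
From mathcomp Require Import all_field.
Set Implicit Arguments. Unset Strict Implicit. Unset Printing Implicit Defensive.
Import GRing.Theory.

Lemma odd_perm_morph (T T' : finType) (phi : {perm T} -> {perm T'}) (c : bool) :
    phi 1%g = 1%g -> {morph phi : s t / (s * t)%g} ->
    (forall x y, x != y -> odd_perm (phi (tperm x y)) = c) ->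
  forall s, odd_perm (phi s) = c && odd_perm s.
Proof.
move=> phi1 phiM phit s; have [ts -> dts] := prod_tpermP s.
elim: ts dts => [|t ts IH] /=; first by rewrite big_nil phi1 !odd_perm1 andbF.
case/andP=> dt dts; rewrite !big_cons phiM !odd_permM IH // phit // odd_tperm dt.
by case: (odd_perm _); rewrite ?andbT ?andbF ?addbF ?addbb.
Qed.

Section FiberedPerm.
Variables T1 T2 : finType.
Implicit Types (s : {perm T1}) (g : T1 -> {perm T2}).
Local Open Scope group_scope.

Definition fibered_fun s g (z : T1 * T2) := (s z.1, g z.1 z.2).

Lemma fibered_fun_inj s g : injective (fibered_fun s g).
Proof. by move=> [x1 x2] [y1 y2] [/perm_inj eq1]; rewrite eq1 => /perm_inj->. Qed.

Definition fibered_perm s g : {perm T1 * T2} := perm (@fibered_fun_inj s g).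

Definition base_perm s := fibered_perm s (fun=> 1).

Definition fiber_perm a (f : {perm T2}) :=
  fibered_perm 1 (fun i => if i == a then f else 1).

Lemma fibered_permE s g z : fibered_perm s g z = (s z.1, g z.1 z.2).
Proof. by rewrite permE. Qed.

Lemma eq_fibered_perm s g h : g =1 h -> fibered_perm s g = fibered_perm s h.
Proof. by move=> eq_gh; apply/permP=> z; rewrite !fibered_permE eq_gh. Qed.

Lemma fibered_permM s t g h :
  fibered_perm s g * fibered_perm t h
    = fibered_perm (s * t) (fun i => g i * h (s i)).
Proof. by apply/permP=> z; rewrite permM !fibered_permE !permM. Qed.

Lemma fibered_perm1 : fibered_perm 1 (fun=> 1) = 1.
Proof. by apply/permP=> -[x y]; rewrite fibered_permE !perm1. Qed.

Lemma fibered_permP (sigma : {perm T1 * T2}) s :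
  (forall i x, (sigma (i, x)).1 = s i) -> exists g, sigma = fibered_perm s g.
Proof.
move=> sigma1; have fiber_inj i : injective (fun x => (sigma (i, x)).2).
  move=> x y eq2; suff [] : (i, x) = (i, y) by [].
  apply: (@perm_inj _ sigma); rewrite [sigma (i, x)]surjective_pairing.
  by rewrite [sigma (i, y)]surjective_pairing eq2 !sigma1.
exists (fun i => perm (fiber_inj i)); apply/permP=> -[i x].
by rewrite fibered_permE permE /= -(sigma1 i x) -surjective_pairing.
Qed.

Lemma odd_base_perm s : odd_perm (base_perm s) = odd #|T2| && odd_perm s.
Proof.
apply: (odd_perm_morph (phi := base_perm)) => [|u v|x y xy].
- exact: fibered_perm1.
- by apply/permP=> z; rewrite permM !fibered_permE !perm1 permM.
have row_inj (b : T2) : injective (fun z : T1 => (z, b)) by move=> ? ? [].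
have tperm_rowsE l : uniq l -> forall (z : T1) (b : T2),
    (\prod_(b' <- l) tperm (x, b') (y, b')) (z, b)
      = if b \in l then (tperm x y z, b) else (z, b).
  elim: l => [_ z b|b' l IH /= /andP[b'l ul] z b]; first by rewrite big_nil perm1.
  rewrite big_cons permM in_cons; have [->|bb'] := eqVneq b b'.
    by rewrite -(inj_tperm _ _ _ (row_inj b')) IH // (negbTE b'l).
  by rewrite tpermD ?IH // xpair_eqE negb_and (eq_sym b') bb' orbT.
have -> : base_perm (tperm x y) = \prod_(b <- enum T2) tperm (x, b) (y, b).
  apply/permP=> -[z b]; rewrite fibered_permE perm1.
  by rewrite tperm_rowsE ?enum_uniq ?mem_enum.
rewrite cardE; elim: (enum T2) => [|b l IH]; first by rewrite big_nil odd_perm1.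
by rewrite big_cons odd_permM IH odd_tperm xpair_eqE (negbTE xy).
Qed.

Lemma odd_fiber_perm a f : odd_perm (fiber_perm a f) = odd_perm f.
Proof.
apply: (odd_perm_morph (phi := fiber_perm a) (c := true)) => [|u v|x y xy].
- by rewrite -fibered_perm1; apply: eq_fibered_perm => i; case: ifP.
- rewrite fibered_permM mulg1; apply: eq_fibered_perm => i; rewrite perm1.
  by case: ifP; rewrite ?mulg1.
have -> : fiber_perm a (tperm x y) = tperm (a, x) (a, y).
  apply/permP=> -[i z]; rewrite fibered_permE perm1 /=.
  have [->|ia] := eqVneq i a; first by rewrite -inj_tperm // => ? ? [].
  by rewrite perm1 tpermD // xpair_eqE negb_and eq_sym ia.
by rewrite odd_tperm xpair_eqE eqxx.
Qed.

Lemma odd_fibered_perm s g :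
  odd_perm (fibered_perm s g)
    = (odd #|T2| && odd_perm s) (+) \big[addb/false]_i odd_perm (g i).
Proof.
have fibersE l : uniq l -> \prod_(a <- l) fiber_perm a (g a)
    = fibered_perm 1 (fun i => if i \in l then g i else 1).
  elim: l => [_|a l IH /= /andP[al ul]].
    by rewrite big_nil -fibered_perm1; apply: eq_fibered_perm.
  rewrite big_cons IH // fibered_permM mulg1; apply: eq_fibered_perm => i.
  rewrite perm1 in_cons; have [->|_] := eqVneq i a; last by rewrite mul1g.
  by rewrite (negbTE al) mulg1.
have -> : fibered_perm s g = fibered_perm 1 g * base_perm s.
  by rewrite fibered_permM mul1g; apply: eq_fibered_perm => i; rewrite mulg1.
have -> : fibered_perm 1 g = \prod_(a <- enum T1) fiber_perm a (g a).
  by rewrite fibersE ?enum_uniq //; apply: eq_fibered_perm => i; rewrite mem_enum.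
rewrite odd_permM odd_base_perm addbC (big_morph _ (@odd_permM _) (odd_perm1 _)).
by rewrite big_enum; congr (_ (+) _); apply: eq_bigr => a _; rewrite odd_fiber_perm.
Qed.

End FiberedPerm.

Section ProjectiveAction.
Variables (F : finFieldType) (n : nat).
Local Open Scope ring_scope.
Local Notation M := 'M[F]_n.+1.
Implicit Types A B D X Y : M.

Lemma is_line_plin_img A L : A \in unitmx -> is_line L -> is_line (plin_img A L).
Proof.
move=> A_unit /existsP[v /andP[v0 /eqP->]]; apply/existsP; exists (v *m A).
apply/andP; split.
  by apply: contra v0 => /eqP vA0; rewrite -(mulmxK A_unit v) vA0 mul0mx.
by rewrite /plin_img -imset_comp; apply/eqP/eq_imset => c /=; rewrite scalemxAl.
Qed.

(* Singular matrices act trivially, so that [pperm] is total. *)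
Definition pact A (x : ppoint F n) : ppoint F n :=
  if A \in unitmx then insubd x (plin_img A (val x)) else x.

Lemma pactE A x : A \in unitmx -> val (pact A x) = plin_img A (val x).
Proof.
by move=> A_unit; rewrite /pact A_unit insubdK //; apply: is_line_plin_img (valP x).
Qed.

Lemma pact_inj A : injective (pact A).
Proof.
case A_unit: (A \in unitmx); last by move=> x y; rewrite /pact A_unit.
move=> x y /(congr1 val); rewrite !pactE // => /imset_inj eq_xy.
by apply/val_inj/eq_xy/(can_inj (mulmxK A_unit)).
Qed.

Definition pperm A : {perm ppoint F n} := perm (@pact_inj A).

Lemma ppermE A x : A \in unitmx -> val (pperm A x) = plin_img A (val x).
Proof. by rewrite permE; apply: pactE. Qed.

Lemma ppermM A B : A \in unitmx -> B \in unitmx ->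
  pperm (A *m B) = (pperm A * pperm B)%g.
Proof.
move=> A_unit B_unit; apply/permP=> x; rewrite permM; apply: val_inj.
rewrite !ppermE ?unitmx_mul ?A_unit // /plin_img -imset_comp.
by apply: eq_imset => v /=; rewrite mulmxA.
Qed.

Lemma pperm1 : pperm 1%:M = 1%g.
Proof.
apply/permP=> x; rewrite perm1; apply: val_inj; rewrite ppermE ?unitmx1 //.
by rewrite /plin_img -[RHS]imset_id; apply: eq_imset => v; rewrite mulmx1.
Qed.

Definition psign A := odd_perm (pperm A).

Lemma psignM A B : A \in unitmx -> B \in unitmx ->
  psign (A *m B) = psign A (+) psign B.
Proof. by move=> A_unit B_unit; rewrite /psign ppermM // odd_permM. Qed.

Lemma psign1 : psign 1%:M = false.
Proof. by rewrite /psign pperm1 odd_perm1. Qed.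

Lemma psign_conj D X Y : D \in unitmx -> X \in unitmx -> D *m X = Y *m D ->
  psign X = psign Y.
Proof.
move=> D_unit X_unit DX_YD; have := unitmx_mul D X; rewrite DX_YD D_unit X_unit.
rewrite unitmx_mul D_unit andbT => Y_unit.
by have := congr1 psign DX_YD; rewrite !psignM // addbC => /addIb.
Qed.

Lemma psign_sqr A : A \in unitmx -> psign (A *m A) = false.
Proof. by move=> A_unit; rewrite psignM // addbb. Qed.

Definition transvection (c : 'cV[F]_n.+1) (r : 'rV[F]_n.+1) : M := 1%:M + c *m r.

Lemma transvectionD c c' r : r *m c' = 0 ->
  transvection c r *m transvection c' r = transvection (c + c') r.
Proof.
move=> rc'0; rewrite /transvection mulmxDl !mulmxDr !mul1mx mulmx1 mulmxA.
by rewrite -(mulmxA c) rc'0 mulmx0 mul0mx addr0 mulmxDl [c *m r + _]addrC addrA.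
Qed.

Lemma transvection_unit c r : r *m c = 0 -> transvection c r \in unitmx.
Proof.
move=> rc0; have rNc0 : r *m - c = 0 by rewrite mulmxN rc0 oppr0.
have := transvectionD c rNc0; rewrite subrr /transvection mul0mx addr0.
by case/mulmx1_unit.
Qed.

Lemma transvection_conj D a c r : D *m c = a *: c -> r *m D = r ->
  D *m transvection c r = transvection (a *: c) r *m D.
Proof.
move=> Dc rD; rewrite /transvection mulmxDr mulmxDl mulmx1 mul1mx.
by rewrite mulmxA Dc -mulmxA rD.
Qed.

Lemma transvection_mul_sub c r A : r *m c = 0 -> r *m A = r ->
  transvection c r *m (A - c *m r) = A.
Proof.
move=> rc0 rA; rewrite /transvection mulmxDl mul1mx mulmxBr -!mulmxA rA.
by rewrite (mulmxA r) rc0 mul0mx mulmx0 subr0 subrK.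
Qed.

End ProjectiveAction.

Section Triangular.
Variables (R : comUnitRingType) (n : nat).
Local Open Scope ring_scope.

Lemma det_upper_trig (A : 'M[R]_n) :
  (forall i j : 'I_n, (j < i)%N -> A i j = 0) -> \det A = \prod_i A i i.
Proof.
move=> A_up; rewrite -det_tr det_trig; first by apply: eq_bigr => i _; rewrite mxE.
by apply/is_trig_mxP => i j ij; rewrite mxE A_up.
Qed.

Lemma unitriangular_unit (A : 'M[R]_n) :
  (forall i j : 'I_n, (j <= i)%N -> A i j = (i == j)%:R) -> A \in unitmx.
Proof.
move=> A_low; rewrite unitmxE det_upper_trig => [|i j ji]; last first.
  by rewrite A_low ?(ltnW ji) // -val_eqE gtn_eqF.
by rewrite big1 ?unitr1 // => i _; rewrite A_low ?eqxx.
Qed.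

End Triangular.

Section Transvections.
Variables (F : finFieldType) (n : nat).
Local Open Scope ring_scope.
Hypothesis F_gt2 : (2 < #|F|)%N.
Local Notation M := 'M[F]_n.+1.

Lemma exists_neq01 : exists a : F, (a != 0) && (a != 1).
Proof.
apply/existsP; apply: contraTT F_gt2 => /existsPn F01; rewrite -leqNgt -cardsT.
apply: (@leq_trans #|[set (0 : F); 1]|); last by rewrite cards2 ltnS leq_b1.
by apply/subset_leq_card/subsetP => x _; move: (F01 x); rewrite !inE negb_and !negbK.
Qed.

(* Conjugating by a diagonal matrix rescales [c] by any [a != 0], and
   [transvection c r *m transvection ((a - 1) *: c) r = transvection (a *: c) r]. *)
Lemma psign_transvection (S : {set 'I_n.+1}) (c : 'cV[F]_n.+1) (r : 'rV[F]_n.+1) :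
    (forall i, i \notin S -> c i 0 = 0) -> (forall j, j \in S -> r 0 j = 0) ->
  psign (transvection c r) = false.
Proof.
move=> c_S r_S; have r_c a : r *m (a *: c) = 0.
  apply/matrixP=> ? ?; rewrite !ord1 !mxE; apply: big1 => k _; rewrite !mxE.
  by case: (boolP (k \in S)) => [/r_S|/c_S]->; rewrite ?mul0r ?mulr0.
have rc0 : r *m c = 0 by rewrite -[c]scale1r r_c.
have psign_scale a : a != 0 ->
    psign (transvection (a *: c) r) = psign (transvection c r).
  pose D : M := diag_mx (\row_k if k \in S then a else 1).
  move=> a0; apply/esym/(@psign_conj _ _ D); rewrite ?transvection_unit //.
    rewrite unitmxE det_diag unitfE; apply/prodf_neq0 => k _.
    by rewrite mxE; case: ifP; rewrite ?oner_neq0.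
  apply: transvection_conj; apply/matrixP => i j.
    rewrite mul_diag_mx !mxE [j]ord1.
    by case: (boolP (i \in S)) => // /c_S->; rewrite !mulr0.
  rewrite mul_mx_diag !mxE [i]ord1.
  by case: (boolP (j \in S)) => [/r_S->|]; rewrite ?mul0r ?mulr1.
have [a /andP[a0 a1]] := exists_neq01.
have := transvectionD c (r_c (a - 1)).
have -> : c + (a - 1) *: c = a *: c by rewrite scalerBl scale1r addrC subrK.
move/(congr1 (@psign F n)).
by rewrite psignM ?transvection_unit ?psign_scale ?subr_eq0 // addbb.
Qed.

Lemma psign_unitriangular (A : M) :
  (forall i j : 'I_n.+1, (j <= i)%N -> A i j = (i == j)%:R) -> psign A = false.
Proof.
suff psign_cols k : forall A : M,
    (forall i j : 'I_n.+1, (j <= i)%N -> A i j = (i == j)%:R) ->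
    (forall i j : 'I_n.+1, (k <= j)%N -> A i j = (i == j)%:R) -> psign A = false.
  by move=> A_low; apply: (psign_cols n.+1) => // i j; rewrite leqNgt ltn_ord.
elim: k => [|k IH] {}A A_low A_k.
  suff -> : A = 1%:M by apply: psign1.
  by apply/matrixP => i j; rewrite A_k // mxE.
have [k_lt | k_ge] := ltnP k n.+1; last first.
  by apply: IH => // i j kj; have := leq_trans k_ge kj; rewrite leqNgt ltn_ord.
(* Split off column [k] as a transvection. *)
pose K := Ordinal k_lt; pose c := col K (A - 1%:M).
pose e : 'rV[F]_n.+1 := delta_mx 0 K.
have A_rowK j : A K j = (K == j)%:R.
  by have [/A_low|/A_k] := leqP j K; apply.
have ec0 : e *m c = 0.
  by apply/rowP => j; rewrite /e -rowE !mxE A_rowK subrr.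
have eA : e *m A = e by apply/rowP => j; rewrite /e -rowE !mxE A_rowK eqxx eq_sym.
have A'E (i j : 'I_n.+1) : (A - c *m e) i j = if j == K then (i == j)%:R else A i j.
  rewrite !mxE big_ord1 !mxE eqxx /=; have [->|jK] := eqVneq j K.
    by rewrite mulr1 opprB addrC subrK.
  by rewrite mulr0 subr0.
have A'_low (i j : 'I_n.+1) : (j <= i)%N -> (A - c *m e) i j = (i == j)%:R.
  by rewrite A'E; case: eqP => // _; apply: A_low.
rewrite -(transvection_mul_sub ec0 eA) psignM ?transvection_unit ?unitriangular_unit //.
rewrite (IH _ A'_low) => [|i j kj]; last first.
  rewrite A'E; case: eqP => // /eqP jK; apply: A_k.
  by rewrite ltn_neqAle kj andbT eq_sym.
rewrite addbF; apply: (@psign_transvection [set i : 'I_n.+1 | (i < K)%N]) => [i|j].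
  rewrite inE -leqNgt !mxE leq_eqVlt => /orP[/eqP/val_inj->|Ki].
    by rewrite A_low // eqxx subrr.
  by rewrite A_low ?(ltnW Ki) // -val_eqE gtn_eqF // subrr.
by rewrite inE mxE /= => jK; rewrite -val_eqE ltn_eqF.
Qed.

End Transvections.

Section EvenField.
Variables (F : finFieldType) (n m : nat).
Local Open Scope ring_scope.
Hypotheses (card_F : #|F| = (2 ^ m)%N) (m_gt1 : (1 < m)%N).
Local Notation M := 'M[F]_n.+1.

Lemma char2_F : 2%:R = 0 :> F.
Proof. by apply: pcharf0; apply: (card_finPcharP card_F). Qed.

Lemma card_F_gt2 : (2 < #|F|)%N.
Proof. by rewrite card_F (@ltn_exp2l 2 1). Qed.

Lemma tperm_mx_char2 (i j : 'I_n.+1) : i != j ->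
  tperm_mx i j
    = (1%:M + delta_mx i j) *m (1%:M + delta_mx j i) *m (1%:M + delta_mx i j) :> M.
Proof.
move=> ij; have ji : j != i by rewrite eq_sym.
rewrite !(mulmxDl, mulmxDr, mul1mx, mulmx1, mul_delta_mx).
rewrite (mul_delta_mx_0 _ _ _ ji) ?addr0 ?add0r.
have two0 : 1 + 1 = 0 :> F by rewrite -char2_F.
apply/matrixP => r l; rewrite !mxE.
case: (tpermP i j r) => [->|->|/eqP ri /eqP rj];
  rewrite ?eqxx ?(negbTE ij) ?(negbTE ji) ?(negbTE ri) ?(negbTE rj) ![l == _]eq_sym /=;
  case: (eqVneq i l) => [il|il]; case: (eqVneq j l) => [jl|jl]; subst;
  rewrite ?eqxx ?(negbTE ij) ?(negbTE ji) ?(negbTE il) ?(negbTE jl) ?addr0 ?add0r //.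
all: by rewrite /= !two0 ?addr0 ?add0r.
Qed.

Lemma unitmx_elementary (i j : 'I_n.+1) :
  i != j -> (1%:M + delta_mx i j : M) \in unitmx.
Proof.
move=> ij; rewrite -[delta_mx i j](@mul_delta_mx _ _ 1 _ 0) transvection_unit //.
by rewrite mul_delta_mx_0 // eq_sym.
Qed.

Lemma psign_elementary (i j : 'I_n.+1) :
  i != j -> psign (1%:M + delta_mx i j : M) = false.
Proof.
move=> ij; rewrite -[delta_mx i j](@mul_delta_mx _ _ 1 _ 0).
apply: (psign_transvection card_F_gt2 (S := [set i])) => [k|k].
  by rewrite inE mxE => /negbTE->.
by rewrite inE mxE => /eqP->; rewrite (negbTE ij) andbF.
Qed.

Lemma psign_perm_mx (s : 'S_n.+1) : psign (perm_mx s : M) = false.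
Proof.
have [ts -> _] := prod_tpermP s; elim: ts => [|t ts IH].
  by rewrite big_nil perm_mx1 psign1.
rewrite big_cons perm_mxM psignM ?unitmx_perm // IH addbF.
have [<-|t12] := eqVneq t.1 t.2; first by rewrite tperm1 perm_mx1 psign1.
have t21 : t.2 != t.1 by rewrite eq_sym.
rewrite [perm_mx _]tperm_mx_char2 // !psignM ?unitmx_mul ?unitmx_elementary //.
by rewrite !psign_elementary.
Qed.

Lemma psign_diag (d : 'rV[F]_n.+1) :
  (forall i, d 0 i != 0) -> psign (diag_mx d) = false.
Proof.
move=> d_neq0; pose e := \row_i d 0 i ^+ (2 ^ m.-1).
have -> : diag_mx d = diag_mx e *m diag_mx e.
  rewrite mul_diag_mx; apply/matrixP => i j; rewrite !mxE mulrnAr -exprD addnn.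
  by rewrite -mul2n -expnS prednK ?(ltnW m_gt1) // -card_F expf_card.
apply: psign_sqr; rewrite unitmxE det_diag unitfE; apply/prodf_neq0 => i _.
by rewrite mxE expf_neq0.
Qed.

Lemma psign_upper (A : M) :
    (forall i j : 'I_n.+1, (j < i)%N -> A i j = 0) -> (forall i, A i i != 0) ->
  psign A = false.
Proof.
move=> A_up A_diag; pose D := diag_mx (\row_i A i i).
pose Dinv := diag_mx (\row_i (A i i)^-1).
have DinvD : Dinv *m D = 1%:M.
  by rewrite mul_diag_mx; apply/matrixP => i j; rewrite !mxE mulrnAr mulVf.
have [Dinv_unit D_unit] := mulmx1_unit DinvD.
have A_low1 (i j : 'I_n.+1) : (j <= i)%N -> (A *m Dinv) i j = (i == j)%:R.
  rewrite mul_mx_diag !mxE leq_eqVlt => /orP[/eqP/val_inj->|ji].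
    by rewrite eqxx mulfV.
  by rewrite (A_up i j ji) mul0r -val_eqE gtn_eqF.
suff: psign (A *m Dinv *m D) = false by rewrite -mulmxA DinvD mulmx1.
rewrite psignM ?(unitriangular_unit A_low1) //.
by rewrite (psign_unitriangular card_F_gt2 A_low1) psign_diag // => i; rewrite mxE.
Qed.

Lemma psign_lower_unitriangular (A : M) :
  (forall i j : 'I_n.+1, (i <= j)%N -> A i j = (i == j)%:R) -> psign A = false.
Proof.
move=> A_low; pose s : 'S_n.+1 := perm (@rev_ord_inj n.+1).
pose B : M := perm_mx s *m A *m perm_mx s^-1.
have B_up (i j : 'I_n.+1) : (j <= i)%N -> B i j = (i == j)%:R.
  rewrite /B -row_permE -col_permE !mxE !permE => ji.
  by rewrite A_low ?(inj_eq rev_ord_inj) //= leq_sub2l.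
have B_unit := unitriangular_unit B_up.
have A_unit : A \in unitmx by move: B_unit; rewrite !unitmx_mul => /andP[/andP[]].
have <- : psign B = psign A.
  by rewrite !psignM ?unitmx_mul ?unitmx_perm ?A_unit // !psign_perm_mx addbF.
exact: (psign_unitriangular card_F_gt2 B_up).
Qed.

Lemma psign_unit (A : M) : A \in unitmx -> psign A = false.
Proof.
move=> A_unit; have := cormen_lup_correct A; have := cormen_lup_perm A.
have := cormen_lup_detL A; have := @cormen_lup_lower _ _ A.
have := @cormen_lup_upper _ _ A.
case: cormen_lup => [[P L] U] /= U_up L_low detL /is_perm_mxP[s ->].
rewrite -!mulmxE => PA_LU.
have L_unit : L \in unitmx by rewrite unitmxE detL unitr1.
have U_unit : U \in unitmx.
  have : perm_mx s *m A \in unitmx by rewrite unitmx_mul unitmx_perm A_unit.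
  by rewrite PA_LU unitmx_mul => /andP[].
have U_diag i : U i i != 0.
  move: U_unit; rewrite unitmxE det_upper_trig // unitfE => /prodf_neq0; exact.
have := congr1 (@psign F n) PA_LU; rewrite !psignM ?unitmx_perm // psign_perm_mx.
by rewrite (psign_lower_unitriangular L_low) (psign_upper U_up U_diag).
Qed.

End EvenField.

Section PointCount.
Variables (F : finFieldType) (n : nat).
Local Open Scope ring_scope.
Local Notation line v := [set c *: v | c : F].

Lemma card_line (v : 'rV[F]_n.+1) : v != 0 -> #|line v| = #|F|.
Proof.
move=> v0; rewrite card_imset // => c d /eqP.
by rewrite -subr_eq0 -scalerBl scalemx_eq0 (negbTE v0) orbF subr_eq0 => /eqP.
Qed.

Lemma line_generators (v : 'rV[F]_n.+1) : v != 0 ->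
  [set w | (w != 0) && (line w == line v)] = line v :\ 0.
Proof.
move=> v0; apply/setP => w; rewrite !inE; have [->|w0] //= := eqVneq w 0.
apply/eqP/imsetP => [eq_wv|[c _ w_cv]].
  by apply/imsetP; rewrite -eq_wv; apply/imsetP; exists 1; rewrite ?scale1r.
have c0 : c != 0 by apply: contra_neq w0 => c0; rewrite w_cv c0 scale0r.
rewrite w_cv; apply/setP => u; apply/imsetP/imsetP => -[d _ ->].
  by exists (d * c); rewrite ?scalerA.
by exists (d / c); rewrite ?scalerA ?mulfVK.
Qed.

Lemma card_ppoint : (#|{: ppoint F n}| * #|F|.-1)%N = (#|F| ^ n.+1).-1.
Proof.
have -> : (#|F| ^ n.+1)%N = #|{: 'rV[F]_n.+1}| by rewrite card_mx mul1n.
rewrite -(cardsC1 (0 : 'rV[F]_n.+1)) -sum1_card.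
rewrite (partition_big (fun v => line v) (fun L => is_line L)) /=; last first.
  by move=> v; rewrite in_setC1 => v0; apply/existsP; exists v; rewrite v0 eqxx.
rewrite card_sig -sum_nat_const; apply: eq_bigr => L /existsP[v /andP[v0 /eqP L_v]].
rewrite L_v sum1_card -(card_line v0) (cardsD1 0 (line v)).
have -> : (0 : 'rV_n.+1) \in line v by apply/imsetP; exists 0; rewrite ?scale0r.
rewrite -line_generators //= add0n; apply: eq_card => w.
by rewrite !inE -topredE /= in_setC1.
Qed.

Lemma odd_card_ppoint : ~~ odd #|F| -> odd #|{: ppoint F n}|.
Proof.
move=> F_even; have F_gt0 : (0 < #|F|)%N by apply/card_gt0P; exists 0.
have : odd (#|F| ^ n.+1).-1.
  by rewrite -[odd _]negbK -oddS prednK ?expn_gt0 ?F_gt0 // oddX (negbTE F_even).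
by rewrite -card_ppoint oddM => /andP[].
Qed.

End PointCount.

Theorem lemma3p7 (m : nat) (F : finFieldType) (n : nat) (B : finType)
  (hq : #|F| = 2 ^ m) (hm : 2 <= m) (hn : 1 <= n)
  (sigma : {perm (B * ppoint F n)}) (sigmaB : {perm B})
  (h1 : forall (i : B) (x : ppoint F n), (sigma (i, x)).1 = sigmaB i)
  (h2 : forall i : B, exists2 A : 'M[F]_n.+1, A \in unitmx &
        forall x : ppoint F n, val (sigma (i, x)).2 = plin_img A (val x)) :
  odd_perm sigma = odd_perm sigmaB.
Proof.
have [g sigma_g] := fibered_permP h1.
have g_even i : odd_perm (g i) = false.
  have [A A_unit A_act] := h2 i.
  suff -> : g i = pperm A by exact: (psign_unit hq hm A_unit).
  apply/permP => x; apply: val_inj.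
  by rewrite ppermE // -A_act sigma_g fibered_permE.
rewrite sigma_g odd_fibered_perm big1 ?addbF // odd_card_ppoint //.
by rewrite hq oddX gtn_eqF // ltnW.
Qed.
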